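(* On a 2-step nilmanifold $X=\Gamma\backslash G$ with abelian invariant complex structure $J$, let $\mu\in\mathfrak g^{*(0,1)}\otimes\mathfrak g^{1,0}$. Then $\mu$ generates an abelian deformation (in the sense of the context) if and only if $\overline\partial\mu=0$ and $\mu$ satisfies Condition A.
   Context: $\mathfrak g$ is the Lie algebra of $G$, real 2-step nilpotent with center $\mathfrak c$; $J$ abelian ($J^2=-1$, $[JA,JB]=[A,B]$); $\Gamma$ discrete co-compact. $\mathfrak t$ is a $J$-invariant complement of $\mathfrak c$ with real basis $\{X_j,JX_j\}_{1\le j\le n}$; $\{Z_\alpha,JZ_\alpha\}_{n+1\le\alpha\le n+m}$ real basis of $\mathfrak c$; $T_j=\frac12(X_j-iJX_j)$, $W_\alpha=\frac12(Z_\alpha-iJZ_\alpha)$ basis of $\mathfrak g^{1,0}$; $[\overline T_k,T_j]=\sum_\alpha E^\alpha_{kj}W_\alpha+\sum_\alpha F^\alpha_{kj}\overline W_\alpha$, $F^\alpha_{kj}=-\overline{E^\alpha_{jk}}$. $\{\omega^p\}$ dual $(1,0)$-basis; $\mu=\sum\mu^i_j\overline\omega^j\otimes T_i+\sum\mu^i_\alpha\overline\omega^\alpha\otimes T_i+\sum\mu^\beta_j\overline\omega^j\otimes W_\beta+\sum\mu^\beta_\alpha\overline\omega^\alpha\otimes W_\beta$, elements of $\mathfrak g^{*(0,1)}\otimes\mathfrak g^{1,0}$ being regarded as linear maps $\mathfrak g^{0,1}\to\mathfrak g^{1,0}$. $\overline\partial$: $\overline\partial V=\sum_p\overline\omega^p\otimes[\overline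 e_p,V]^{1,0}$ for $V\in\mathfrak g^{1,0}$, $\overline\partial\overline\sigma=(d\overline\sigma)^{(0,2)}$, $\overline\partial(\overline\sigma\otimes V)=\overline\partial\overline\sigma\otimes V-\overline\sigma\wedge\overline\partial V$. Condition A: $\sum_i(\mu^i_jF^\alpha_{ki}-\mu^i_kF^\alpha_{ji})=0$ and $\sum_i\mu^i_\alpha F^\beta_{ji}=0$ for all $j,k,\alpha,\beta$. ''$\mu$ generates an abelian deformation'' means: there is a power series $\Phi(t)=\sum_{r\ge1}t^r\phi_r$ with $\phi_r\in\mathfrak g^{*(0,1)}\otimes\mathfrak g^{1,0}$, $\phi_1=\mu$, convergent for small real $t$, such that for all small $t$ the vectors $\overline S_j=\overline T_j+\Phi(t)\overline T_j$ and $\overline V_\alpha=\overline W_\alpha+\Phi(t)\overline W_\alpha$ satisfy $[\overline S_j,\overline S_k]=0$, $[\overline S_j,\overline V_\alpha]=0$, $[\overline V_\alpha,\overline V_\beta]=0$ (so they span the $(0,1)$-space of an abelian invariant complex structure). *)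

From HB Require Import structures.
From mathcomp Require Import all_boot all_order all_algebra.
From mathcomp Require Import all_classical all_reals all_analysis.
From mathcomp Require Import complex.
Set Implicit Arguments. Unset Strict Implicit. Unset Printing Implicit Defensive.
Import Order.TTheory GRing.Theory Num.Theory.
Local Open Scope classical_set_scope.
Local Open Scope ring_scope.

(* The complexified Lie algebra g_C = g^{1,0} (+) g^{0,1}.  The basis of      *)
(* g^{1,0} is indexed by p : 'I_(n+m):  p = lshift m j  stands for T_j        *)
(* (j : 'I_n) and p = rshift n a stands for W_a (a : 'I_m).  The basis of     *)
(* g^{0,1} is the conjugate basis (Tbar_j, Wbar_a), indexed the same way.    *)
(* An element of g_C is a pair (x10, x01) of coordinate row vectors.          *)

Section Setting.
Variable R : realType.
Local Notation C := (R[i]).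
Variables n m : nat.

Definition gC := ('rV[C]_(n + m) * 'rV[C]_(n + m))%type.

Definition e10 (p : 'I_(n + m)) : gC := (delta_mx 0 p, 0).
Definition e01 (p : 'I_(n + m)) : gC := (0, delta_mx 0 p).

(* Structure constants: E a k j = E^a_{kj}; F^a_{kj} = - conj(E^a_{jk}). *)
Definition Fc (E : 'I_m -> 'M[C]_n) (a : 'I_m) (k j : 'I_n) : C :=
  - conjc (E a j k).

(* The Lie bracket of g_C determined by E: the only nonzero brackets of basis
   vectors are  [Tbar_k, T_j] = sum_a E^a_{kj} W_a + sum_a F^a_{kj} Wbar_a
   and  [T_j, Tbar_k] = - [Tbar_k, T_j]  (J abelian: [T_j,T_k] = 0 =
   [Tbar_j,Tbar_k]; the center c_C = span(W, Wbar)), extended bilinearly. *)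
Definition brk (E : 'I_m -> 'M[C]_n) (X Y : gC) : gC :=
  let s k j :=
    X.2 0 (lshift m k) * Y.1 0 (lshift m j)
    - X.1 0 (lshift m j) * Y.2 0 (lshift m k) in
  (\row_(p < n + m) match fintype.split p with
                    | inl _ => 0
                    | inr a => \sum_(k < n) \sum_(j < n) s k j * E a k j
                    end,
   \row_(p < n + m) match fintype.split p with
                    | inl _ => 0
                    | inr a => \sum_(k < n) \sum_(j < n) s k j * Fc E a k j
                    end).

(* "c is the center of g": no nonzero real element
   v = sum_j (z_j T_j + conj(z_j) Tbar_j) of the complement t is central. *)
Definition center_is_c (E : 'I_m -> 'M[C]_n) : Prop :=
  forall z : 'rV[C]_n,
    (forall Y : gC,
        brk E (\row_(p < n + m) match fintype.split p with
                                | inl j => z 0 j | inr _ => 0 end,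
               \row_(p < n + m) match fintype.split p with
                                | inl j => conjc (z 0 j) | inr _ => 0 end) Y
        = (0, 0)) ->
    z = 0.

(* Elements of g^{*(0,1)} (x) g^{1,0}, regarded as linear maps
   g^{0,1} -> g^{1,0}: a matrix M with  M i p = mu^i_p, i.e.
   mu(ebar_p) = sum_i M i p e_i.  So mu^i_j = M (lshift i) (lshift j),
   mu^i_a = M (lshift i) (rshift a), mu^b_j = M (rshift b) (lshift j),
   mu^b_a = M (rshift b) (rshift a). *)
Definition apply01 (M : 'M[C]_(n + m)) (p : 'I_(n + m)) : 'rV[C]_(n + m) :=
  \row_(i < n + m) M i p.

(* A (0,1)-form sigma is given by its values sigma p = sigma(ebar_p) (it
   vanishes on g^{1,0}).  A (0,1)-form with values in g^{1,0} is given by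
   psi : 'I_(n+m) -> 'rV_(n+m) (psi p = value on ebar_p).  A (0,2)-form
   (scalar or g^{1,0}-valued) is given by its values on pairs of basis
   vectors (ebar_a, ebar_b). *)

Definition omb (p : 'I_(n + m)) : 'I_(n + m) -> C :=
  fun q => (p == q)%:R.

Definition form01_eval (sigma : 'I_(n + m) -> C) (X : gC) : C :=
  \sum_(q < n + m) sigma q * X.2 0 q.

(* d sigma (X,Y) = - sigma([X,Y]) for invariant forms; dbar sigma = (d sigma)^{(0,2)} *)
Definition dbar_form (E : 'I_m -> 'M[C]_n) (sigma : 'I_(n + m) -> C)
  : 'I_(n + m) -> 'I_(n + m) -> C :=
  fun a b => - form01_eval sigma (brk E (e01 a) (e01 b)).

(* dbar V = sum_p omegabar^p (x) [ebar_p, V]^{1,0}  for V in g^{1,0} *)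
Definition dbar_vec (E : 'I_m -> 'M[C]_n) (V : 'rV[C]_(n + m))
  : 'I_(n + m) -> 'rV[C]_(n + m) :=
  fun p => (brk E (e01 p) (V, 0)).1.

Definition wedge1 (sigma : 'I_(n + m) -> C) (psi : 'I_(n + m) -> 'rV[C]_(n + m))
  : 'I_(n + m) -> 'I_(n + m) -> 'rV[C]_(n + m) :=
  fun a b => sigma a *: psi b - sigma b *: psi a.

(* dbar mu, using mu = sum_p omegabar^p (x) mu(ebar_p) and
   dbar(sigma (x) V) = dbar sigma (x) V - sigma ^ dbar V. *)
Definition dbar_mu (E : 'I_m -> 'M[C]_n) (M : 'M[C]_(n + m))
  : 'I_(n + m) -> 'I_(n + m) -> 'rV[C]_(n + m) :=
  fun a b => \sum_(p < n + m)
     (dbar_form E (omb p) a b *: apply01 M p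
      - wedge1 (omb p) (dbar_vec E (apply01 M p)) a b).

Definition dbar_closed (E : 'I_m -> 'M[C]_n) (M : 'M[C]_(n + m)) : Prop :=
  forall a b, dbar_mu E M a b = 0.

Definition conditionA (E : 'I_m -> 'M[C]_n) (M : 'M[C]_(n + m)) : Prop :=
  (forall (j k : 'I_n) (a : 'I_m),
      \sum_(i < n) (M (lshift m i) (lshift m j) * Fc E a k i
                    - M (lshift m i) (lshift m k) * Fc E a j i) = 0)
  /\ (forall (j : 'I_n) (a b : 'I_m),
      \sum_(i < n) M (lshift m i) (rshift n a) * Fc E b j i = 0).

(* The (0,1)-vectors ebar_p + Phi(ebar_p), i.e. Sbar_j and Vbar_a. *)
Definition defvec (Phi : 'M[C]_(n + m)) (p : 'I_(n + m)) : gC :=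
  (apply01 Phi p, delta_mx 0 p).

Definition abelian_def (E : 'I_m -> 'M[C]_n) (Phi : 'M[C]_(n + m)) : Prop :=
  forall p q, brk E (defvec Phi p) (defvec Phi q) = (0, 0).

Definition cvgC (u : nat -> C) (l : C) : Prop :=
  ((fun N : nat => (complex.Re (u N) : R^o)) @ \oo --> (complex.Re l : R^o))
  /\ ((fun N : nat => (complex.Im (u N) : R^o)) @ \oo --> (complex.Im l : R^o)).

Definition series_at (phi : nat -> 'M[C]_(n + m)) (t : R) (P : 'M[C]_(n + m))
  : Prop :=
  forall i p, cvgC (fun N => \sum_(1 <= r < N) ((t ^+ r)%:C * phi r i p)%C) (P i p).

Definition generates_abelian_deformation (E : 'I_m -> 'M[C]_n)
    (M : 'M[C]_(n + m)) : Prop :=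
  exists phi : nat -> 'M[C]_(n + m),
    phi 1%N = M /\
    exists delta : R, 0 < delta /\
      forall t : R, `|t| < delta ->
        exists P : 'M[C]_(n + m), series_at phi t P /\ abelian_def E P.

End Setting.

(* Because J is abelian, g^{1,0} and g^{0,1} are abelian subalgebras, so the
   bracket of two deformed vectors ebar_p + Phi(ebar_p) and ebar_q + Phi(ebar_q)
   is linear in Phi: its W- and Wbar-components are the antisymmetric parts of
   E^a Phi and F^a Phi, where E^a and F^a act on the T-coordinates only.  Thus
   Phi defines an abelian structure iff every E^a Phi and F^a Phi is symmetric;
   for Phi = mu these conditions are dbar mu = 0 and Condition A respectively.
   If Phi(t) = sum_r t^r phi_r satisfies these linear conditions for all small
   t, so does its first coefficient mu, by uniqueness of power-series
   coefficients; conversely Phi(t) = t mu is an abelian deformation. *)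

From HB Require Import structures.
From mathcomp Require Import all_boot all_order all_algebra.
From mathcomp Require Import all_classical all_reals all_analysis.
From mathcomp Require Import complex ring lra.
Import Order.TTheory GRing.Theory Num.Theory.
Set Implicit Arguments. Unset Strict Implicit. Unset Printing Implicit Defensive.
Local Open Scope classical_set_scope.
Local Open Scope ring_scope.

Section PowerSeriesUniqueness.
Variable R : realType.

Lemma psum_terms_bounded (u : nat -> R) (l : R) :
  (fun N => \sum_(1 <= r < N) u r) @ \oo --> (l : R^o) ->
  exists2 B, 0 <= B & forall r, (0 < r)%N -> `|u r| <= B.
Proof.
set S := fun N => \sum_(1 <= r < N) u r.
move=> /(cvgP (l : R^o)) /cvg_seq_bounded Sbd.
have [M /= SM] := (@ex_bound _ _ _ _ _ (@globally_properfilter _ _ 0%N I)).1 Sbd.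
have M0 : 0 <= M by apply: le_trans (SM 0%N I); rewrite /S big_geq.
exists (M + M); first exact: addr_ge0.
move=> r r0; have -> : u r = S r.+1 - S r by rewrite /S big_nat_recr //= addrAC subrr add0r.
by apply: le_trans (ler_normB _ _) _; apply: lerD; apply: SM.
Qed.

Lemma geometric_sum_le2 (x : R) k : 0 <= x -> x <= 1 / 2 -> \sum_(i < k) x ^+ i <= 2.
Proof.
move=> x0 x12.
have S0 : 0 <= \sum_(i < k) x ^+ i by apply: sumr_ge0 => i _; apply: exprn_ge0.
have : (1 - x) * \sum_(i < k) x ^+ i = 1 - x ^+ k.
  by rewrite -opprB mulNr -subrX1 opprB.
have : 0 <= x ^+ k by apply: exprn_ge0.
nra.
Qed.

Lemma psum_tail_le (a : nat -> R) (t0 B t : R) N : 0 < t0 -> 0 <= B ->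
  (forall r, (0 < r)%N -> `|t0 ^+ r * a r| <= B) -> 0 < t -> t <= t0 / 2 ->
  `|\sum_(2 <= r < N) t ^+ r * a r| <= 2 * B * (t / t0) ^+ 2.
Proof.
move=> t00 B0 aB t0' tt0; set x := t / t0.
have x0 : 0 <= x by rewrite divr_ge0 // ltW.
have x12 : x <= 1 / 2 by rewrite ler_pdivrMr //; lra.
have termE r : t ^+ r * a r = x ^+ r * (t0 ^+ r * a r).
  by rewrite mulrA -exprMn divfK ?gt_eqF.
apply: le_trans (ler_norm_sum _ _ _) _.
apply: (@le_trans _ _ (\sum_(2 <= r < N) B * x ^+ r)).
  apply: ler_sum_nat => r /andP [r2 _]; rewrite termE normrM ger0_norm ?exprn_ge0 //.
  by rewrite mulrC ler_wpM2r ?exprn_ge0 // aB // (leq_trans _ r2).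
rewrite -{1}(add0n 2%N) big_addn big_mkord.
under eq_bigr do rewrite exprD mulrCA.
rewrite -mulr_suml.
have := geometric_sum_le2 (N - 2) x0 x12.
have : 0 <= B * x ^+ 2 by rewrite mulr_ge0 ?exprn_ge0.
nra.
Qed.

Lemma power_series_coef1_eq0 (a : nat -> R) (d : R) : 0 < d ->
  (forall t : R, `|t| < d ->
     (fun N => \sum_(1 <= r < N) t ^+ r * a r) @ \oo --> (0 : R^o)) ->
  a 1%N = 0.
Proof.
move=> d0 S0; set t0 := d / 2.
have t00 : 0 < t0 by rewrite divr_gt0.
have t0d : `|t0| < d by rewrite gtr0_norm // /t0; lra.
have [B B0 aB] := psum_terms_bounded (S0 t0 t0d).
have a1_le t : 0 < t -> t <= t0 / 2 -> `|a 1%N| * t <= 2 * B * (t / t0) ^+ 2.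
  move=> t0' tt0.
  have -> : `|a 1%N| * t = `|0 - t * a 1%N| by rewrite sub0r normrN normrM gtr0_norm // mulrC.
  have St : (fun N => \sum_(1 <= r < N) t ^+ r * a r) @ \oo --> (0 : R^o).
    by apply: S0; rewrite gtr0_norm //; move: tt0; rewrite /t0; lra.
  apply: (cvgr_to_le (cvg_norm (cvgB St (cvg_cst (t * a 1%N : R^o))))); near=> N.
  have N2 : (1 < N)%N by near: N; exists 2%N.
  change (`|\sum_(1 <= r < N) t ^+ r * a r - t * a 1%N| <= 2 * B * (t / t0) ^+ 2).
  rewrite (big_ltn N2) expr1 addrAC subrr add0r.
  exact: psum_tail_le.
apply/normr0_eq0/eqP; rewrite eq_le normr_ge0 andbT; apply/ler_addgt0Pr => e e0; rewrite add0r.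
set t := Num.min (t0 / 2) (e * t0 ^+ 2 / (2 * (B + 1))).
have t0' : 0 < t by rewrite lt_min !divr_gt0 ?mulr_gt0 ?exprn_gt0 //; lra.
have tt0 : t <= t0 / 2 by rewrite ge_min lexx.
have te : t <= e * t0 ^+ 2 / (2 * (B + 1)) by rewrite ge_min lexx orbT.
have := a1_le t t0' tt0.
rewrite (_ : 2 * B * (t / t0) ^+ 2 = 2 * B * t / t0 ^+ 2 * t); last first.
  by field; rewrite gt_eqF.
rewrite ler_pM2r // => h; apply: le_trans h _; rewrite ler_pdivrMr ?exprn_gt0 //.
move: te; rewrite ler_pdivlMr ?mulr_gt0 //; last lra.
nra.
Unshelve. all: end_near.
Qed.

End PowerSeriesUniqueness.

Local Notation Re := complex.Re.
Local Notation Im := complex.Im.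

Section ComplexConvergence.
Variable R : realType.
Local Notation C := R[i].

Lemma ReM (x y : C) : Re (x * y) = Re x * Re y - Im x * Im y.
Proof. by case: x y => [a b] [c d]. Qed.

Lemma ImM (x y : C) : Im (x * y) = Re x * Im y + Im x * Re y.
Proof. by case: x y => [a b] [c d]. Qed.

Lemma cvgCD (u v : nat -> C) (a b : C) :
  cvgC u a -> cvgC v b -> cvgC (fun N => u N + v N) (a + b).
Proof.
by move=> [ua ua'] [vb vb']; split;
  rewrite raddfD; under eq_fun do rewrite raddfD; exact: cvgD.
Qed.

Lemma cvgCB (u v : nat -> C) (a b : C) :
  cvgC u a -> cvgC v b -> cvgC (fun N => u N - v N) (a - b).
Proof.
by move=> [ua ua'] [vb vb']; split;
  rewrite raddfB; under eq_fun do rewrite raddfB; exact: cvgB.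
Qed.

Lemma cvgCMl (c : C) (u : nat -> C) (a : C) :
  cvgC u a -> cvgC (fun N => c * u N) (c * a).
Proof.
move=> [ua ua']; split.
  by rewrite ReM; under eq_fun do rewrite ReM; apply: cvgB; apply: cvgMl_tmp.
by rewrite ImM; under eq_fun do rewrite ImM; apply: cvgD; apply: cvgMl_tmp.
Qed.

Lemma cvgC_sum k (u : nat -> 'I_k -> C) (a : 'I_k -> C) :
  (forall i, cvgC (u^~ i) (a i)) ->
  cvgC (fun N => \sum_(i < k) u N i) (\sum_(i < k) a i).
Proof.
elim: k u a => [|k IH] u a ua.
  by rewrite big_ord0; under eq_fun do rewrite big_ord0; split; apply: cvg_cst.
rewrite big_ord_recr; under eq_fun do rewrite big_ord_recr.
by apply: cvgCD; [apply: (IH (fun N i => u N (widen_ord _ i))) | apply: ua].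
Qed.

Lemma Re_psum (t : R) (z : nat -> C) N :
  Re (\sum_(1 <= r < N) ((t ^+ r)%:C * z r)%C) = \sum_(1 <= r < N) t ^+ r * Re (z r).
Proof. by rewrite raddf_sum; apply: eq_bigr => r _; case: (z r) => a b /=; ring. Qed.

Lemma Im_psum (t : R) (z : nat -> C) N :
  Im (\sum_(1 <= r < N) ((t ^+ r)%:C * z r)%C) = \sum_(1 <= r < N) t ^+ r * Im (z r).
Proof. by rewrite raddf_sum; apply: eq_bigr => r _; case: (z r) => a b /=; ring. Qed.

Lemma cvgC_psum_coef1_eq0 (z : nat -> C) (d : R) : 0 < d ->
  (forall t : R, `|t| < d ->
     cvgC (fun N => \sum_(1 <= r < N) ((t ^+ r)%:C * z r)%C) 0) ->
  z 1%N = 0.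
Proof.
move=> d0 zS.
have re0 : Re (z 1%N) = 0.
  apply: (power_series_coef1_eq0 (a := fun r => Re (z r)) d0) => t /zS [zRe _].
  by under eq_fun do rewrite -Re_psum.
have im0 : Im (z 1%N) = 0.
  apply: (power_series_coef1_eq0 (a := fun r => Im (z r)) d0) => t /zS [_ zIm].
  by under eq_fun do rewrite -Im_psum.
by case: (z 1%N) re0 im0 => a b /= -> ->.
Qed.

End ComplexConvergence.

Section MatrixSeries.
Variables (R : realType) (n m : nat).
Local Notation C := R[i].
Local Notation Mx := 'M[C]_(n + m).
Implicit Types (phi psi : nat -> Mx) (P Q A : Mx) (t : R).

Lemma series_atB phi psi t P Q : series_at phi t P -> series_at psi t Q ->
  series_at (fun r => phi r - psi r) t (P - Q).
Proof.
move=> phiP psiQ i p; rewrite mxE.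
under eq_fun do under eq_bigr do rewrite !mxE mulrBr.
under eq_fun do rewrite sumrB.
by rewrite mxE; apply: cvgCB.
Qed.

Lemma series_at_trmx phi t P :
  series_at phi t P -> series_at (fun r => (phi r)^T) t P^T.
Proof. by move=> phiP i p; rewrite mxE; under eq_fun do under eq_bigr do rewrite mxE. Qed.

Lemma series_atMl A phi t P :
  series_at phi t P -> series_at (fun r => A *m phi r) t (A *m P).
Proof.
move=> phiP i p; rewrite mxE.
under eq_fun do under eq_bigr do rewrite mxE mulr_sumr.
under eq_fun do rewrite exchange_big /=.
apply: cvgC_sum => l.
under eq_fun do under eq_bigr do rewrite mulrCA.
under eq_fun do rewrite -mulr_sumr.
exact: cvgCMl.
Qed.

Lemma series_at_coef1_eq0 psi (d : R) : 0 < d ->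
  (forall t, `|t| < d -> series_at psi t 0) -> psi 1%N = 0.
Proof.
move=> d0 psi0; apply/matrixP => i p; rewrite mxE.
apply: (cvgC_psum_coef1_eq0 (z := fun r => psi r i p) d0) => t /psi0 /(_ i p).
by rewrite mxE.
Qed.

Lemma series_at_symmetric_coef1 A phi (d : R) : 0 < d ->
  (forall t, `|t| < d -> exists2 P, series_at phi t P & (A *m P)^T = A *m P) ->
  (A *m phi 1%N)^T = A *m phi 1%N.
Proof.
move=> d0 symP; apply/eqP; rewrite eq_sym -subr_eq0; apply/eqP.
apply: (series_at_coef1_eq0 (psi := fun r => A *m phi r - (A *m phi r)^T) d0).
move=> t /symP [P phiP symAP].
rewrite -(subrr (A *m P)) -{2}symAP.
by apply: series_atB; [| apply: series_at_trmx]; apply: series_atMl.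
Qed.

Lemma series_at_linear (M : Mx) t :
  series_at (fun r => if r == 1%N then M else 0) t ((t%:C)%C *: M).
Proof.
have psumE i p N : (1 < N)%N ->
    \sum_(1 <= r < N) ((t ^+ r)%:C * (if r == 1%N then M else 0) i p)%C =
    ((t%:C)%C *: M) i p.
  move=> N1; rewrite big_ltn // eqxx expr1 mxE big_nat_cond big1 ?addr0 //.
  by move=> r /andP [/andP [r1 _] _]; rewrite gtn_eqF // mxE mulr0.
by move=> i p; split; apply: cvg_near_cst; exists 2%N => // N /= N2; rewrite psumE.
Qed.

End MatrixSeries.

Section TBlock.
Variables (R : realType) (n m : nat).
Local Notation C := R[i].

Definition Tblock (G : 'M[C]_n) : 'M[C]_(n + m) := block_mx G 0 0 0.

Definition center_row (f : 'I_m -> C) : 'rV[C]_(n + m) :=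
  \row_p match fintype.split p with inl _ => 0 | inr a => f a end.

Definition tform (G : 'M[C]_n) (v u : 'rV[C]_(n + m)) : C :=
  (v *m (Tblock G *m u^T)) 0 0.

Lemma split_rshift (a : 'I_m) : fintype.split (rshift n a) = inr a.
Proof. exact: (unsplitK (inr a : 'I_n + 'I_m)). Qed.

Lemma mul_Tblock_lshift k G (X : 'M[C]_(n + m, k)) (i : 'I_n) q :
  (Tblock G *m X) (lshift m i) q = \sum_(j < n) G i j * X (lshift m j) q.
Proof.
rewrite /Tblock mxE big_split_ord /= [X in _ + X]big1 ?addr0 => [|a _].
  by apply: eq_bigr => j _; rewrite block_mxEul.
by rewrite block_mxEur mxE mul0r.
Qed.

Lemma mul_Tblock_rshift k G (X : 'M[C]_(n + m, k)) (a : 'I_m) q :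
  (Tblock G *m X) (rshift n a) q = 0.
Proof.
by rewrite /Tblock mxE big_split_ord /= !big1 ?addr0 // => j _;
  rewrite ?block_mxEdl ?block_mxEdr mxE mul0r.
Qed.

Lemma tformE G v u : tform G v u =
  \sum_(k < n) \sum_(j < n) v 0 (lshift m k) * G k j * u 0 (lshift m j).
Proof.
rewrite /tform mxE big_split_ord /= [X in _ + X]big1 ?addr0 => [|a _].
  apply: eq_bigr => k _; rewrite mul_Tblock_lshift mulr_sumr.
  by apply: eq_bigr => j _; rewrite mxE mulrA.
by rewrite mul_Tblock_rshift mulr0.
Qed.

Lemma tform0 G v : tform G v 0 = 0.
Proof. by rewrite /tform trmx0 !mulmx0 mxE. Qed.

Lemma tform_delta G p P q :
  tform G (delta_mx 0 p) (apply01 P q) = (Tblock G *m P) p q.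
Proof.
have colP : (apply01 P q)^T = col q P by apply/matrixP => i j; rewrite !mxE.
by rewrite /tform colP -rowE colE mulmxA -colE !mxE.
Qed.

Lemma center_row_eq0 f : center_row f = 0 <-> forall a, f a = 0.
Proof.
split=> [/rowP f0 a | f0]; first by have := f0 (rshift n a); rewrite !mxE split_rshift.
by apply/rowP => i; rewrite !mxE; case: (fintype.split i).
Qed.

End TBlock.

Arguments Tblock {R n m} G.
Arguments center_row {R n m} f.
Arguments tform {R n m} G v u.

Lemma symmetric_entriesP (V : Type) k (A : 'M[V]_k) :
  A^T = A <-> (forall p q, A p q = A q p).
Proof.
split=> [sA p q | sA]; first by rewrite -{1}sA mxE.
by apply/matrixP => p q; rewrite mxE.
Qed.

Section Characterizations.
Variables (R : realType) (n m : nat).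
Local Notation C := R[i].
Variable E : 'I_m -> 'M[C]_n.

Definition Fmx (a : 'I_m) : 'M[C]_n := \matrix_(k, j) Fc E a k j.

Lemma brkE X Y : brk E X Y =
  (center_row (fun a => tform (E a) X.2 Y.1 - tform (E a) Y.2 X.1),
   center_row (fun a => tform (Fmx a) X.2 Y.1 - tform (Fmx a) Y.2 X.1)).
Proof.
congr pair; apply/rowP => i; rewrite !mxE; case: (fintype.split i) => // a;
  rewrite !tformE -sumrB; apply: eq_bigr => k _; rewrite -sumrB;
  apply: eq_bigr => j _; rewrite ?mxE; ring.
Qed.


Lemma abelian_defE P : abelian_def E P <-> forall a,
  (Tblock (E a) *m P)^T = Tblock (E a) *m P /\
  (Tblock (Fmx a) *m P)^T = Tblock (Fmx a) *m P.
Proof.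
have brk_defvec p q : brk E (defvec P p) (defvec P q) =
  (center_row (fun a => (Tblock (E a) *m P) p q - (Tblock (E a) *m P) q p),
   center_row (fun a => (Tblock (Fmx a) *m P) p q - (Tblock (Fmx a) *m P) q p)).
  by rewrite brkE; congr (center_row _, center_row _); apply: funext => a;
    rewrite /= !tform_delta.
split=> [abP a | symP p q].
  split; apply/symmetric_entriesP => p q; apply/eqP; rewrite eq_sym -subr_eq0;
    have := abP q p; rewrite brk_defvec => -[/center_row_eq0 E0 /center_row_eq0 F0].
    by rewrite E0.
  by rewrite F0.
rewrite brk_defvec; congr pair; apply/center_row_eq0 => a; apply/eqP; rewrite subr_eq0;
  have [/symmetric_entriesP sE /symmetric_entriesP sF] := symP a.
  by rewrite sE.
by rewrite sF.
Qed.

Lemma dbar_form_eq0 (sigma : 'I_(n + m) -> C) a b : dbar_form E sigma a b = 0.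
Proof.
rewrite /dbar_form.
have -> : brk E (e01 R a) (e01 R b) = (0, 0).
  by rewrite brkE; congr pair; apply/center_row_eq0 => c; rewrite /= !tform0 subrr.
by rewrite /form01_eval big1 ?oppr0 // => q _; rewrite mxE mulr0.
Qed.

Lemma dbar_vec_apply01 M p q : dbar_vec E (apply01 M q) p =
  center_row (fun a => (Tblock (E a) *m M) p q).
Proof.
rewrite /dbar_vec brkE /=; congr center_row; apply: funext => a.
by rewrite tform_delta tform0 subr0.
Qed.

Lemma dbar_muE M a b : dbar_mu E M a b =
  center_row (fun x => (Tblock (E x) *m M) a b - (Tblock (E x) *m M) b a).
Proof.
have sum_omb (f : 'I_(n + m) -> 'rV[C]_(n + m)) c :
    \sum_(p < n + m) omb R p c *: f p = f c.
  rewrite (bigD1 c) //= big1 ?addr0 => [|p pc]; first by rewrite /omb eqxx scale1r.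
  by rewrite /omb (negPf pc) scale0r.
rewrite /dbar_mu; under eq_bigr do rewrite dbar_form_eq0 scale0r sub0r.
rewrite sumrN /wedge1 sumrB (sum_omb (fun p => dbar_vec E (apply01 M p) b)).
rewrite (sum_omb (fun p => dbar_vec E (apply01 M p) a)) !dbar_vec_apply01.
by apply/rowP => i; rewrite !mxE; case: (fintype.split i) => [_|x];
  rewrite ?opprB ?subrr ?oppr0.
Qed.

Lemma dbar_closedE M :
  dbar_closed E M <-> forall a, (Tblock (E a) *m M)^T = Tblock (E a) *m M.
Proof.
split=> [dM a | symM p q].
  apply/symmetric_entriesP => p q; apply/eqP; rewrite -subr_eq0.
  by move: (dM p q); rewrite dbar_muE => /center_row_eq0 /(_ a) ->.
rewrite dbar_muE; apply/center_row_eq0 => a.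
by rewrite ((symmetric_entriesP _).1 (symM a) p q) subrr.
Qed.

Lemma mul_Tblock_Fmx_lshift (M : 'M[C]_(n + m)) a i q :
  (Tblock (Fmx a) *m M) (lshift m i) q = \sum_(j < n) M (lshift m j) q * Fc E a i j.
Proof. by rewrite mul_Tblock_lshift; apply: eq_bigr => j _; rewrite mxE mulrC. Qed.

Lemma conditionAE M :
  conditionA E M <-> forall a, (Tblock (Fmx a) *m M)^T = Tblock (Fmx a) *m M.
Proof.
rewrite /conditionA; split=> [[A1 A2] a | symM].
  apply/symmetric_entriesP => p q; rewrite -[p]splitK -[q]splitK.
  case: (fintype.split p) => [k|c]; case: (fintype.split q) => [j|c'] /=;
    rewrite ?mul_Tblock_Fmx_lshift ?mul_Tblock_rshift ?A2 //.
  by apply/eqP; rewrite -subr_eq0 -sumrB; apply/eqP; apply: A1.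
have symE := fun a => (symmetric_entriesP _).1 (symM a).
split=> [j k a | j c a].
  by rewrite sumrB -!mul_Tblock_Fmx_lshift symE subrr.
by rewrite -mul_Tblock_Fmx_lshift symE mul_Tblock_rshift.
Qed.

End Characterizations.

Theorem theorem5p3 (R : realType) (n m : nat) (E : 'I_m -> 'M[R[i]]_n)
    (hn : (0 < n)%N) (hcenter : center_is_c E) (M : 'M[R[i]]_(n + m)) :
  generates_abelian_deformation E M <-> (dbar_closed E M /\ conditionA E M).
Proof.
(* [hn] and [hcenter] describe the geometric setting. *)
split=> [[phi [<- [d [d0 defPhi]]]] | [/dbar_closedE symE /conditionAE symF]].
  have coef1 G : (forall P, abelian_def E P -> (G *m P)^T = G *m P) ->
      (G *m phi 1%N)^T = G *m phi 1%N.
    move=> symG; apply: (series_at_symmetric_coef1 d0) => t /defPhi [P [phiP abP]].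
    by exists P; last exact: symG.
  split; [apply/dbar_closedE | apply/conditionAE] => a; apply: coef1 => P /abelian_defE abP.
    exact: (abP a).1.
  exact: (abP a).2.
exists (fun r => if r == 1%N then M else 0); split => //.
exists 1; split => // t _; exists ((t%:C)%C *: M); split; first exact: series_at_linear.
by apply/abelian_defE => a; rewrite -!scalemxAr !linearZ /= symE symF.
Qed.
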